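(* There exist finite-dimensional Hilbert spaces $\mathcal{H}_A,\mathcal{H}_B,\mathcal{H}_C$, a reference basis of $\mathcal{H}_A$, and a state $\rho_{ABC}$ on $\mathcal{H}_A\otimes\mathcal{H}_B\otimes\mathcal{H}_C$ such that $$C^{A|BC}_r(\rho_{ABC})<C^{A|B}_r(\rho_{AB})+C^{A|C}_r(\rho_{AC}),$$ where $\rho_{AB},\rho_{AC}$ are the reduced states.
   Context: $S(\rho\|\sigma)=\mathrm{Tr}\,\rho(\log\rho-\log\sigma)$ is the relative entropy. A state on $\mathcal{H}_A$ is incoherent if it is diagonal in the fixed basis of $\mathcal{H}_A$. The set $\mathcal{IQ}$ of incoherent-quantum states on $\mathcal{H}_A\otimes\mathcal{H}_X$ consists of states $\sum_kp_k\sigma^A_k\otimes\tau^X_k$ with each $\sigma^A_k$ incoherent and $\tau^X_k$ arbitrary states; $C^{A|X}_r(\rho_{AX})=\min_{\sigma\in\mathcal{IQ}}S(\rho_{AX}\|\sigma)$ (here $X$ is $B$, $C$, or the composite $BC$). *)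

From HB Require Import structures.
From mathcomp Require Import all_boot all_order all_algebra.
From mathcomp Require Import complex mxtens.
From mathcomp Require Import reals constructive_ereal ereal exp.
From mathcomp Require Import classical_sets.

Set Implicit Arguments.
Unset Strict Implicit.
Unset Printing Implicit Defensive.

Import Order.TTheory GRing.Theory Num.Theory.
Local Open Scope ring_scope.
Local Open Scope sesquilinear_scope.

Section QuantumDefs.
Variable R : realType.
Local Notation C := (R[i]).

Definition density_mx n (rho : 'M[C]_n) : Prop :=
  rho = rho ^t* /\
  (forall u : 'rV[C]_n, 0 <= (u *m rho *m u ^t*) 0 0) /\
  \tr rho = 1.

(* functional calculus for normal (in particular Hermitian) matrices, via the
   spectral decomposition A = P^-1 diag(d) P of mathcomp's spectral.v;
   f is applied to the real parts of the (real) eigenvalues *)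
Definition mx_fun (f : R -> R) n (A : 'M[C]_n) : 'M[C]_n :=
  invmx (spectralmx A) *m
  diag_mx (\row_i ((f (complex.Re (spectral_diag A 0 i)))%:C)%C) *m spectralmx A.

(* matrix logarithm (natural log).  The value assigned to eigenvalue 0 is
   irrelevant wherever it is used below (see rel_entropy). *)
Definition logm n (A : 'M[C]_n) : 'M[C]_n := mx_fun (@ln R) A.

(* Umegaki relative entropy S(rho||sigma) = Tr rho (log rho - log sigma),
   with value +oo when supp rho is not contained in supp sigma
   (i.e. ker sigma not contained in ker rho). *)
Definition rel_entropy n (rho sigma : 'M[C]_n) : \bar R :=
  if (kermx sigma <= kermx rho)%MS
  then (complex.Re (\tr (rho *m (logm rho - logm sigma))))%:E
  else +oo%E.

(* incoherent state on C^dA: a diagonal density matrix (fixed basis = the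
   standard basis of C^dA) *)
Definition incoherent_state dA (s : 'M[C]_dA) : Prop :=
  density_mx s /\ is_diag_mx s.

(* incoherent-quantum states on H_A (x) H_X, H_X = C^dX; the tensor product
   C^dA (x) C^dX is C^(dA*dX) via mxtens (Kronecker product). *)
Definition IQ_state dA dX (sigma : 'M[C]_(dA * dX)) : Prop :=
  exists (K : nat) (p : 'I_K -> R) (s : 'I_K -> 'M[C]_dA) (t : 'I_K -> 'M[C]_dX),
    [/\ forall k, 0 <= p k,
        \sum_k p k = 1,
        forall k, incoherent_state (s k),
        forall k, density_mx (t k) &
        sigma = \sum_k ((p k)%:C)%C *: (s k *t t k)].

Definition coh_rel_ent dA dX (rho : 'M[C]_(dA * dX)) : \bar R :=
  ereal_inf [set rel_entropy rho sigma | sigma in [set s | IQ_state s]]%classic.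

Definition idx3 dA dB dC (a : 'I_dA) (b : 'I_dB) (c : 'I_dC) : 'I_(dA * (dB * dC)) :=
  mxtens_index (a, mxtens_index (b, c)).

Definition ptrace_C dA dB dC (rho : 'M[C]_(dA * (dB * dC))) : 'M[C]_(dA * dB) :=
  \matrix_(i, j) \sum_(c < dC)
     rho (idx3 (mxtens_unindex i).1 (mxtens_unindex i).2 c)
         (idx3 (mxtens_unindex j).1 (mxtens_unindex j).2 c).

Definition ptrace_B dA dB dC (rho : 'M[C]_(dA * (dB * dC))) : 'M[C]_(dA * dC) :=
  \matrix_(i, j) \sum_(b < dB)
     rho (idx3 (mxtens_unindex i).1 b (mxtens_unindex i).2)
         (idx3 (mxtens_unindex j).1 b (mxtens_unindex j).2).

End QuantumDefs.

(* Take B and C one-dimensional and A a qubit in the pure state |+><+|.  All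
   three states in the inequality are then |+><+|, so it reads
   C_r(|+>) < 2 C_r(|+>).  With a trivial environment the incoherent-quantum
   states are the diagonal states diag(a, b), and since log |+><+| = 0,
   S(|+><+| || diag(a, b)) = -(ln a + ln b) / 2, which is at least ln 2 by
   AM-GM (ab <= 1/4), with equality at a = b = 1/2.  Hence C_r(|+>) = ln 2 > 0. *)

From HB Require Import structures.
From mathcomp Require Import all_boot all_order all_algebra.
From mathcomp Require Import complex mxtens.
From mathcomp Require Import reals constructive_ereal ereal exp.
From mathcomp Require Import classical_sets.
From mathcomp Require Import ring lra.

Set Implicit Arguments.
Unset Strict Implicit.
Unset Printing Implicit Defensive.

Import Order.TTheory GRing.Theory Num.Theory.
Local Open Scope ring_scope.
Local Open Scope sesquilinear_scope.
Local Open Scope complex_scope.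

Section CoherenceOfPlusState.
Variable R : realType.
Local Notation C := (R[i]).

Lemma mul_conjT_row_ge0 n (u : 'rV[C]_n) : 0 <= (u *m u ^t*) 0 0.
Proof.
rewrite !mxE; apply: sumr_ge0 => j _; rewrite !mxE; exact: mul_conjC_ge0.
Qed.

Lemma psd_diag_mx n (d : 'rV[C]_n) (u : 'rV[C]_n) :
  (forall j, 0 <= d 0 j) -> 0 <= (u *m diag_mx d *m u ^t*) 0 0.
Proof.
move=> d_ge0; rewrite mul_mx_diag !mxE; apply: sumr_ge0 => j _.
by rewrite !mxE mulrAC; apply: mulr_ge0 => //; exact: mul_conjC_ge0.
Qed.

Lemma psd_mx_diag_ge0 n (A : 'M[C]_n) j :
  (forall u : 'rV[C]_n, 0 <= (u *m A *m u ^t*) 0 0) -> 0 <= A j j.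
Proof.
move=> A_psd; have := A_psd (delta_mx 0 j).
have -> : (delta_mx 0 j : 'rV[C]_n) ^t* = delta_mx j 0.
  by apply/matrixP => a b; rewrite !mxE rmorph_nat andbC.
by rewrite -rowE -colE !mxE.
Qed.

Lemma spectral_diag_root2 n (A : 'M[C]_n) (a b : C) :
  A \is normalmx -> (A - a%:M) *m (A - b%:M) = 0 ->
  forall i, spectral_diag A 0 i = a \/ spectral_diag A 0 i = b.
Proof.
move=> /orthomx_spectralP A_spec ab_root i.
set P := spectralmx A; set d := spectral_diag A.
have P_unit : P \in unitmx by exact: spectral_unit.
have conj_shift c : diag_mx d - c%:M = P *m (A - c%:M) *m invmx P.
  rewrite mulmxBr mulmxBl mul_mx_scalar -scalemxAl mulmxV // scalemx1.
  by rewrite A_spec !mulmxA mulmxV // mul1mx -mulmxA mulmxV // mulmx1.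
have : (diag_mx d - a%:M) *m (diag_mx d - b%:M) = 0.
  rewrite !conj_shift -!mulmxA (mulmxA (invmx P)) mulVmx // mul1mx.
  by rewrite !mulmxA -(mulmxA P) ab_root mulmx0 mul0mx.
move/matrixP => /(_ i i); rewrite !mxE (bigD1 i) //= big1 ?addr0.
  rewrite !mxE eqxx mulr1n => /eqP; rewrite mulf_eq0 !subr_eq0.
  by case/orP => /eqP; [left | right].
by move=> j /negbTE ji; rewrite !mxE ji eq_sym ji mulr0n !subr0 mul0r.
Qed.

(* On a normal matrix with two eigenvalues, any function agrees on the
   spectrum with an affine one, so the functional calculus is affine. *)
Lemma mx_fun_affine (f : R -> R) n (A : 'M[C]_n) (a b al be : R) :
  A \is normalmx -> (A - a%:C%:M) *m (A - b%:C%:M) = 0 ->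
  f a = al + be * a -> f b = al + be * b ->
  mx_fun f A = al%:C%:M + be%:C *: A.
Proof.
move=> A_normal ab_root fa fb.
have f_spec i : (f (complex.Re (spectral_diag A 0 i)))%:C = al%:C + be%:C * spectral_diag A 0 i.
  by have [|] := spectral_diag_root2 A_normal ab_root i => ->;
    rewrite /= ?fa ?fb rmorphD rmorphM.
move/orthomx_spectralP: A_normal => A_spec; rewrite /mx_fun.
have -> : diag_mx (\row_i (f (complex.Re (spectral_diag A 0 i)))%:C) =
          al%:C%:M + be%:C *: diag_mx (spectral_diag A).
  apply/matrixP => i j; rewrite !mxE f_spec.
  by case: (i == j); rewrite ?mulr1n ?mulr0n ?mulr0 ?addr0.
rewrite mulmxDr mulmxDl -scalemxAr -scalemxAl -A_spec.
by rewrite mul_mx_scalar -scalemxAl mulVmx ?spectral_unit // scalemx1.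
Qed.

Definition plus_state : 'M[C]_2 := const_mx 2^-1.

Definition diag2 (a b : R) : 'M[C]_2 :=
  diag_mx (\row_j (if j == 0 then a%:C else b%:C)).

Lemma plus_state_density : density_mx plus_state.
Proof.
rewrite /plus_state.
split; first by apply/matrixP => i j; rewrite !mxE fmorphV rmorph_nat.
split; last first.
  rewrite /mxtrace !big_ord_recr big_ord0 /= !mxE add0r.
  by rewrite -[in RHS](@divff _ 2) ?pnatr_eq0 // mulr_natl mulr2n.
move=> u; have -> : (u *m plus_state *m u ^t*) 0 0 =
    2^-1 * ((\sum_j u 0 j) * (\sum_j u 0 j)^*).
  rewrite !mxE rmorph_sum.
  under eq_bigr do rewrite !mxE.
  under eq_bigr do under eq_bigr do rewrite mxE.
  rewrite !big_distrr /=; apply: eq_bigr => j _.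
  by rewrite -big_distrl /= mulrCA mulrA.
by apply: mulr_ge0; [rewrite invr_ge0 ler0n | exact: mul_conjC_ge0].
Qed.

Lemma plus_state_normal : plus_state \is normalmx.
Proof. by case: plus_state_density => herm _; apply/normalmxP; rewrite -herm. Qed.

Lemma plus_state_idem : plus_state *m plus_state = plus_state.
Proof.
apply/matrixP => i j; rewrite !mxE !big_ord_recr big_ord0 /= !mxE add0r.
by field.
Qed.

(* The pure state has eigenvalues 0 and 1, and the library's [ln 0 = 0]
   coincides with [ln 1]; this realises the convention [0 log 0 = 0]. *)
Lemma logm_plus_state : logm plus_state = 0.
Proof.
have root01 : (plus_state - 0%:C%:M) *m (plus_state - 1%:C%:M) = 0.
  by rewrite raddf0 subr0 mulmxBr mulmx1 plus_state_idem subrr.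
rewrite /logm (mx_fun_affine plus_state_normal root01 (al := 0) (be := 0)).
- by rewrite raddf0 scale0r addr0.
- by rewrite ln0 // mul0r addr0.
- by rewrite ln1 mul0r addr0.
Qed.

Lemma diag2_herm a b : (diag2 a b)^t* = diag2 a b.
Proof.
apply/matrixP => i j; rewrite !mxE; have [->|ji] := eqVneq j i.
  by rewrite !mulr1n; case: (i == 0); exact: conjc_real.
by rewrite !mulr0n conjC0.
Qed.

Lemma diag2_density a b : 0 <= a -> 0 <= b -> a + b = 1 -> density_mx (diag2 a b).
Proof.
move=> a_ge0 b_ge0 ab1; split; first by rewrite diag2_herm.
split.
  by move=> u; apply: psd_diag_mx => j; rewrite mxE; case: ifP; rewrite ler0c.
by rewrite /mxtrace !big_ord_recr big_ord0 /= !mxE add0r -rmorphD ab1.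
Qed.

Lemma diag2_normal a b : diag2 a b \is normalmx.
Proof. by apply/normalmxP; rewrite diag2_herm. Qed.

Lemma affine_interpolation (f : R -> R) (a b : R) :
  exists al be, f a = al + be * a /\ f b = al + be * b.
Proof.
have [->|ab] := eqVneq a b; first by exists (f b), 0; rewrite mul0r addr0.
exists (f a - (f a - f b) / (a - b) * a), ((f a - f b) / (a - b)).
by split; [rewrite subrK | field; rewrite subr_eq0].
Qed.

Lemma mx_fun_diag2 f a b : mx_fun f (diag2 a b) = diag2 (f a) (f b).
Proof.
have [al [be [fa fb]]] := affine_interpolation f a b.
have root_ab : (diag2 a b - a%:C%:M) *m (diag2 a b - b%:C%:M) = 0.
  apply/matrixP => i j; rewrite !mxE (bigD1 i) //= big1 ?addr0 => [|k /negbTE ki].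
    rewrite !mxE eqxx; case: (i == j); case: (i == 0);
      by rewrite ?subrr ?mulr0n ?mul0r ?mulr0.
  by rewrite !mxE [i == k]eq_sym ki !mulr0n subr0 mul0r.
rewrite (mx_fun_affine (diag2_normal a b) root_ab fa fb).
apply/matrixP => i j; rewrite !mxE; case: (i == j); rewrite ?mulr0n ?mulr0 ?addr0 //.
by case: (i == 0); rewrite !mulr1n ?fa ?fb rmorphD rmorphM.
Qed.

Lemma diag2_unitmx a b : a != 0 -> b != 0 -> diag2 a b \in unitmx.
Proof.
move=> a_neq0 b_neq0; rewrite unitmxE det_diag unitfE.
by rewrite !big_ord_recr big_ord0 /= !mxE mul1r mulf_neq0 ?fmorph_eq0.
Qed.

Lemma tr_plus_state_diag2 a b : \tr (plus_state *m diag2 a b) = ((a + b) / 2)%:C.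
Proof.
rewrite mul_mx_diag /mxtrace !big_ord_recr big_ord0 /= !mxE add0r /=.
by rewrite rmorphM fmorphV rmorph_nat rmorphD mulrDl mulrC [b%:C / _]mulrC.
Qed.

Lemma rel_entropy_plus_diag2 a b : 0 < a -> 0 < b ->
  rel_entropy plus_state (diag2 a b) = (- (ln a + ln b) / 2)%:E.
Proof.
move=> a_gt0 b_gt0; rewrite /rel_entropy.
have /eqP -> : kermx (diag2 a b) == 0.
  by rewrite kermx_eq0 row_free_unit diag2_unitmx ?gt_eqF.
rewrite sub0mx logm_plus_state /logm mx_fun_diag2 sub0r mulmxN.
by rewrite raddfN /= tr_plus_state_diag2 /= mulNr.
Qed.

Lemma diag2_kermx_sub_plus a b :
  (kermx (diag2 a b) <= kermx plus_state)%MS -> a != 0 /\ b != 0.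
Proof.
move=> ker_sub.
have entry_neq0 (j : 'I_2) : (if j == 0 then a%:C else b%:C) != 0.
  apply/negP => /eqP dj0.
  have : ((delta_mx 0 j : 'rV[C]_2) <= kermx (diag2 a b))%MS.
    apply/sub_kermxP; rewrite -rowE; apply/matrixP => k l.
    by rewrite !mxE dj0 mul0rn.
  move/submx_trans/(_ ker_sub)/sub_kermxP; rewrite -rowE => /matrixP/(_ 0 0).
  by rewrite !mxE => /eqP; rewrite invr_eq0 pnatr_eq0.
by split; [move: (entry_neq0 0) | move: (entry_neq0 1)]; rewrite /= fmorph_eq0.
Qed.

Lemma rel_entropy_plus_diag2_ge a b : 0 <= a -> 0 <= b -> a + b = 1 ->
  ((ln 2)%:E <= rel_entropy plus_state (diag2 a b))%E.
Proof.
move=> a_ge0 b_ge0 ab1.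
have [ker_sub|/negbTE ker_nsub] := boolP (kermx (diag2 a b) <= kermx plus_state)%MS;
  last by rewrite /rel_entropy ker_nsub leey.
have [a_neq0 b_neq0] := diag2_kermx_sub_plus ker_sub.
have a_gt0 : 0 < a by rewrite lt_def a_neq0.
have b_gt0 : 0 < b by rewrite lt_def b_neq0.
rewrite rel_entropy_plus_diag2 // lee_fin.
have ab_le : a * b <= 2^-1 * 2^-1.
  have := sqr_ge0 (a - b); have : (a + b) ^+ 2 = 1 by rewrite ab1 expr1n.
  nra.
have half_gt0 : (0 : R) < 2^-1 by rewrite invr_gt0 ltr0n.
have := ab_le; rewrite -ler_ln ?posrE ?mulr_gt0 //.
rewrite !lnM ?posrE // lnV ?posrE ?ltr0n //.
lra.
Qed.

Lemma IQ_state_trivial_env dA (sig : 'M[C]_(dA * 1)) : IQ_state sig ->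
  exists d : 'I_dA -> R, [/\ forall j, 0 <= d j, \sum_j d j = 1 &
    forall i j, sig (mxtens_index (i, 0)) (mxtens_index (j, 0)) = (d j)%:C *+ (i == j)].
Proof.
case=> K [p [s [t [p_ge0 p_sum s_inc t_dens ->]]]].
pose x j := \sum_k (p k)%:C * s k j j.
have x_ge0 j : 0 <= x j.
  apply: sumr_ge0 => k _; rewrite mulr_ge0 ?ler0c //.
  by case: (s_inc k) => -[_ [s_psd _]] _; exact: psd_mx_diag_ge0.
have xE j : x j = (complex.Re (x j))%:C by rewrite RRe_real ?ger0_real.
have t1 k : t k 0 0 = 1 by case: (t_dens k) => _ [_]; rewrite /mxtrace big_ord1.
exists (fun j => complex.Re (x j)); split.
- by move=> j; rewrite -ler0c -xE.
- have : \sum_j x j = 1.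
    rewrite exchange_big /= -(rmorph1 (real_complex R)) -p_sum rmorph_sum.
    apply: eq_bigr => k _; rewrite -mulr_sumr.
    by case: (s_inc k) => -[_ [_]]; rewrite /mxtrace => -> _; rewrite mulr1.
  under eq_bigr do rewrite xE; rewrite -rmorph_sum.
  by move/(congr1 (@complex.Re R)).
move=> i j; rewrite summxE -xE.
under eq_bigr do rewrite mxE tensmxE t1 mulr1.
have [<-|ij] := eqVneq i j; first by rewrite mulr1n.
rewrite mulr0n big1 // => k _.
by case: (s_inc k) => _ /is_diag_mxP -> //; rewrite mulr0.
Qed.

Lemma mxtens_index_qubit (i : 'I_2) : mxtens_index (i, 0 : 'I_1) = i :> 'I_(2 * 1).
Proof. by apply: val_inj; rewrite /= muln1 addn0. Qed.

Lemma IQ_state_qubit (sig : 'M[C]_(2 * 1)) : IQ_state sig ->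
  exists a b, [/\ 0 <= a, 0 <= b, a + b = 1 & sig = diag2 a b].
Proof.
case/IQ_state_trivial_env => d [d_ge0 d_sum sigE].
exists (d 0), (d 1); split; [exact: d_ge0 | exact: d_ge0 | |].
  by rewrite -d_sum big_ord_recr big_ord1 /=; congr (d _ + d _); apply: val_inj.
apply/matrixP => i j; have := sigE i j; rewrite !mxtens_index_qubit !mxE => ->.
have [<-|_] := eqVneq i j; last by rewrite !mulr0n.
rewrite !mulr1n; case: ifP => [/eqP -> // | i_neq0].
by congr (d _)%:C; apply: val_inj; move: i_neq0; case: i => -[|[|//]].
Qed.

Lemma IQ_state_diag2 a b : 0 <= a -> 0 <= b -> a + b = 1 ->
  @IQ_state R 2 1 (diag2 a b).
Proof.
move=> a_ge0 b_ge0 ab1.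
have one_density : density_mx (1%:M : 'M[C]_1).
  split; first by apply/matrixP => i j; rewrite !ord1 !mxE mulr1n conjC1.
  by split; [move=> u; rewrite mulmx1; exact: mul_conjT_row_ge0 | rewrite mxtrace1].
exists 1%N, (fun _ => 1), (fun _ => diag2 a b), (fun _ => 1%:M); split => //.
- by rewrite big_ord1.
- by move=> _; split; [exact: diag2_density | exact: diag_mx_is_diag].
rewrite big_ord1 scale1r; apply/matrixP => k l.
rewrite -[k]mxtens_unindexK -[l]mxtens_unindexK.
case: (mxtens_unindex k) => i i'; case: (mxtens_unindex l) => j j'.
by rewrite tensmxE !ord1 !mxtens_index_qubit [1%:M _ _]mxE mulr1.
Qed.

Lemma coh_rel_ent_plus_state : @coh_rel_ent R 2 1 plus_state = (ln 2)%:E.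
Proof.
have half_ge0 : (0 : R) <= 2^-1 by rewrite invr_ge0 ler0n.
have halves : (2^-1 + 2^-1 : R) = 1 by field.
apply/eqP; rewrite eq_le; apply/andP; split.
  apply: ereal_inf_lbound; exists (diag2 2^-1 2^-1); first exact: IQ_state_diag2.
  rewrite rel_entropy_plus_diag2 ?invr_gt0 ?ltr0n // lnV ?posrE ?ltr0n //.
  by congr (_%:E); field.
apply: le_ereal_inf_tmp => _ [sig /IQ_state_qubit [a [b [a_ge0 b_ge0 ab1 ->]]] <-].
exact: rel_entropy_plus_diag2_ge.
Qed.

End CoherenceOfPlusState.

Theorem proposition2 (R : realType) :
  exists (dA dB dC : nat) (rho : 'M[R[i]]_(dA * (dB * dC))),
    density_mx rho /\
    (coh_rel_ent rho < coh_rel_ent (ptrace_C rho) + coh_rel_ent (ptrace_B rho))%E.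
Proof.
exists 2%N, 1%N, 1%N, (@plus_state R); split; first exact: plus_state_density.
have trC : ptrace_C (@plus_state R : 'M_(2 * (1 * 1))) = @plus_state R.
  by apply/matrixP => i j; rewrite !mxE big_ord1 mxE.
have trB : ptrace_B (@plus_state R : 'M_(2 * (1 * 1))) = @plus_state R.
  by apply/matrixP => i j; rewrite !mxE big_ord1 mxE.
rewrite trC trB coh_rel_ent_plus_state -EFinD lte_fin ltrDl ln_gt0 //.
by rewrite ltr1n.
Qed.
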